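(* Let $p/q$ (with $p,q$ coprime positive integers) be a convergent of the simple continued fraction expansion of $e$. (i) If $q>1$ and $S(q)$ denotes the smallest positive integer such that $q$ divides $S(q)!$, then $q^2 < (S(q)+1)!$. (ii) If $n>0$ is an integer and $n! = dq$ for some integer $d$ (i.e. $n!$ is a multiple of $q$), then $d^2 > \dfrac{n!}{n+1}$.
   Context: The convergents of $e$ are the rationals $p_k/q_k$ (in lowest terms, $q_k>0$) obtained by truncating the simple continued fraction expansion of $e$; they begin $2/1, 3/1, 8/3, 11/4, 19/7, 87/32,\dots$. *)

From HB Require Import structures.
From mathcomp Require Import all_boot all_order all_algebra.
From mathcomp Require Import reals.
From mathcomp Require Import sequences.
From mathcomp.analysis Require Import exp.
Set Implicit Arguments. Unset Strict Implicit. Unset Printing Implicit Defensive.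
Import Order.TTheory GRing.Theory Num.Theory.
Local Open Scope ring_scope.

Section CF.
Variable R : realType.

Fixpoint cf_rem (x : R) (k : nat) : R :=
  match k with
  | O => x
  | k'.+1 => (cf_rem x k' - (Num.floor (cf_rem x k'))%:~R)^-1
  end.

Definition cf_digit (x : R) (k : nat) : int := Num.floor (cf_rem x k).

(* returns ((p_{k-1}, q_{k-1}), (p_k, q_k)) with the standard recurrence
   p_k = a_k p_{k-1} + p_{k-2}, q_k = a_k q_{k-1} + q_{k-2},
   p_{-1} = 1, q_{-1} = 0, p_{-2} = 0, q_{-2} = 1. *)
Fixpoint cf_pq (x : R) (k : nat) : (int * int) * (int * int) :=
  match k with
  | O => ((1, 0), (cf_digit x 0, 1))
  | k'.+1 =>
      let: ((pm, qm), (p, q)) := cf_pq x k' in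
      ((p, q), (cf_digit x k * p + pm, cf_digit x k * q + qm))
  end.

Definition cf_num (x : R) (k : nat) : int := (cf_pq x k).2.1.
Definition cf_den (x : R) (k : nat) : int := (cf_pq x k).2.2.

End CF.

From HB Require Import structures.
From mathcomp Require Import all_boot all_order all_algebra.
From mathcomp Require Import reals.
From mathcomp Require Import sequences.
From mathcomp.analysis Require Import exp.
From mathcomp Require Import filter normedtype.
From mathcomp Require Import ring lra zify.
Set Implicit Arguments. Unset Strict Implicit. Unset Printing Implicit Defensive.
Import Order.TTheory GRing.Theory Num.Theory.
Local Open Scope ring_scope.

(* A convergent p/q of an irrational x satisfies |q x - p| < 1/q.  For e, the
   exponential series places n! e at distance at least 1/(n+1) from every
   integer once n >= 2 (the tail n!/(n+1)! + n!/(n+2)! + ... lies in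
   (1/(n+1), 2/(n+1)]).  If n! = d q then n! e - d p = d (q e - p), whence
   1/(n+1) < d/q, i.e. q < d (n+1); both claims follow: q^2 < q d (n+1) = (n+1)!
   and d^2 (n+1) > d q = n!. *)

Section irrational_numbers.
Variable R : realType.
Implicit Types y : R.

Lemma irrationalBz y (z : int) : irrational y -> irrational (y - z%:~R).
Proof.
by move=> yI [r _ ryz]; apply: yI; exists (r + z%:~R) => //; rewrite rmorphD/= rmorph_int ryz subrK.
Qed.

Lemma irrationalV y : irrational y -> irrational y^-1.
Proof. by move=> yI [r _ ry]; apply: yI; exists r^-1 => //; rewrite fmorphV/= ry invrK. Qed.

Lemma irrational_neq_int y (z : int) : irrational y -> y != z%:~R.
Proof. by move=> yI; apply/eqP => yz; apply: yI; exists z%:~R => //; rewrite ratr_int. Qed.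

Lemma irrational_inv_fract_gt1 y : irrational y -> 1 < (y - (Num.floor y)%:~R)^-1.
Proof.
move=> yI; have /andP[fl_le lt_fl1] := floor_itv y.
have fract_gt0 : 0 < y - (Num.floor y)%:~R.
  by rewrite lt_def subr_eq0 irrational_neq_int // subr_ge0.
rewrite -[1 < _]invf_lt1 ?invrK ?invr_gt0 //.
by move: lt_fl1; rewrite intrD; lra.
Qed.

End irrational_numbers.

Section continued_fraction.
Variables (R : realType) (x : R).
Hypothesis xI : irrational x.

Lemma cf_remS k :
  cf_rem x k.+1 = (cf_rem x k - (cf_digit x k)%:~R)^-1.
Proof. by []. Qed.

Lemma cf_rem_irrational k : irrational (cf_rem x k).
Proof. by elim: k => // k IH; rewrite cf_remS; apply/irrationalV/irrationalBz. Qed.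

Lemma cf_rem_gt1 k : 1 < cf_rem x k.+1.
Proof. exact/irrational_inv_fract_gt1/cf_rem_irrational. Qed.

Lemma cf_digit_gt0 k : 0 < cf_digit x k.+1.
Proof. by rewrite /cf_digit floor_gt0 ltW // cf_rem_gt1. Qed.

Lemma cf_remE k : cf_rem x k = (cf_digit x k)%:~R + (cf_rem x k.+1)^-1.
Proof. by rewrite cf_remS invrK addrC subrK. Qed.

Lemma cf_pqS k : cf_pq x k.+1 =
  ((cf_pq x k).2, (cf_digit x k.+1 * (cf_pq x k).2.1 + (cf_pq x k).1.1,
                   cf_digit x k.+1 * (cf_pq x k).2.2 + (cf_pq x k).1.2)).
Proof. by rewrite /=; case: (cf_pq x k) => [[]? ? []]. Qed.

Lemma cf_pq_invariant k :
  let: ((p', q'), (p, q)) := cf_pq x k in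
  [/\ x * (q%:~R * cf_rem x k.+1 + q'%:~R) = p%:~R * cf_rem x k.+1 + p'%:~R,
      (p * q' - p' * q) ^+ 2 = 1, 0 <= q' & 0 < q].
Proof.
have rem_neq0 j : cf_rem x j.+1 != 0 by rewrite gt_eqF // (lt_trans ltr01) ?cf_rem_gt1.
elim: k => [|k IH].
  have := cf_remE 0; have := rem_neq0 0.
  move: (cf_rem x 1) => y y_neq0 /= xE.
  split=> //; first by rewrite {1}xE; field.
  by rewrite mulr0 sub0r mulr1 sqrrN expr1n.
move: IH; rewrite cf_pqS.
have := cf_remE k.+1; have := rem_neq0 k.+1.
move: (cf_rem x k.+1) (cf_rem x k.+2) => y0 y1 y1_neq0 ->.
case: (cf_pq x k) => [[p' q'] [p q]] /= [xE det q'_ge0 q_gt0]; split.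
- have := congr1 ( *%R^~ y1) xE; rewrite !rmorphD !rmorphM /= => xE'.
  by apply: etrans (etrans _ xE') _; field.
- by rewrite -det; ring.
- exact: ltW.
- by rewrite ltr_wpDr // mulr_gt0 // cf_digit_gt0.
Qed.

Lemma cf_num_den_approx k :
  `|x * (cf_den x k)%:~R - (cf_num x k)%:~R| * (cf_den x k)%:~R < 1.
Proof.
have := cf_pq_invariant k; have := cf_rem_gt1 k; rewrite /cf_num /cf_den.
move: (cf_rem x k.+1) => y y_gt1.
case: (cf_pq x k) => [[p' q'] [p q]] /= [xE det q'_ge0 q_gt0].
have q_gt0R : 0 < q%:~R :> R by rewrite ltr0z.
have q_lt : q%:~R < q%:~R * y + q'%:~R :> R.
  by rewrite -[ltLHS]addr0 ltr_leD ?ler0z // -[ltLHS]mulr1 ltr_pM2l.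
(* the error times [q y + q'] is minus the determinant [p q' - p' q = ±1] *)
have err : `|x * q%:~R - p%:~R| * (q%:~R * y + q'%:~R) = 1.
  have E : (x * q%:~R - p%:~R) * (q%:~R * y + q'%:~R) = - (p * q' - p' * q)%:~R.
    transitivity (q%:~R * (x * (q%:~R * y + q'%:~R)) - p%:~R * (q%:~R * y + q'%:~R)).
      by ring.
    by rewrite xE !rmorphB !rmorphM /=; ring.
  have det1 : `|p * q' - p' * q| = 1 by apply/eqP; rewrite -sqr_norm_eq1 det.
  rewrite -[X in _ * X]gtr0_norm ?(lt_trans q_gt0R) // -normrM E normrN.
  by rewrite -intr_norm det1.
rewrite -[ltRHS]err ltr_pM2l // lt_def normr_ge0 andbT.
by apply: contra_eq_neq err => ->; rewrite mul0r eq_sym oner_neq0.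
Qed.

End continued_fraction.

Lemma fact_dvdn_fact i n : (i <= n)%N -> (i`! %| n`!)%N.
Proof. by move=> le_in; rewrite -(bin_fact le_in) dvdn_mull ?dvdn_mulr. Qed.

Section e_factorial.
Variable R : realType.
Local Notation u := (exp_coeff (1 : R)).
Local Notation e := (expR (1 : R)).

Lemma exp_coeff1E i : u i = (i`!%:R)^-1.
Proof. by rewrite /exp_coeff /= expr1n mul1r. Qed.

Lemma fact_mul_series_exp_coeff1 n :
  n`!%:R * series u n.+1 = (\sum_(i < n.+1) n`! %/ i`!)%:R.
Proof.
rewrite /series /= big_mkord mulr_sumr natr_sum; apply: eq_bigr => i _.
rewrite exp_coeff1E natr_div //; last by rewrite unitfE pnatr_eq0 -lt0n fact_gt0.
exact/fact_dvdn_fact/ltnSE/ltn_ord.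
Qed.

Lemma series_exp_coeff1_le_expR n : series u n <= e.
Proof.
apply: nondecreasing_cvgn_le; last exact: is_cvg_series_exp_coeff.
by move=> a b; apply: nondecreasing_series => i _ _; rewrite exp_coeff1E invr_ge0 ler0n.
Qed.

Lemma series_exp_coeff1_tail_nonincreasing m : (0 < m)%N ->
  series u m.+1 + 2 / m.+1`!%:R <= series u m + 2 / m`!%:R.
Proof.
move=> m_gt0; rewrite seriesSr exp_coeff1E -addrA lerD2l factS natrM invfM.
have two_b_le1 : 2 / m.+1%:R <= 1 :> R by rewrite ler_pdivrMr ?ltr0n // mul1r ler_nat ltnS.
by rewrite [leRHS]mulr_natl mulr2n lerD2l mulrA ler_piMl // invr_ge0 ler0n.
Qed.

Lemma expR1_le_series n : e <= series u n.+1 + 2 / n.+1`!%:R.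
Proof.
have le_tail j : series u (n.+1 + j)%N <= series u n.+1 + 2 / n.+1`!%:R.
  have tail_ge0 : 0 <= 2 / (n.+1 + j)`!%:R :> R by rewrite divr_ge0 ?ler0n.
  apply: le_trans (_ : _ <= series u (n.+1 + j)%N + 2 / (n.+1 + j)`!%:R) _.
    by rewrite lerDl.
  elim: j {tail_ge0} => [|j IH]; first by rewrite addn0 lexx.
  apply: le_trans IH; rewrite addnS.
  by apply: series_exp_coeff1_tail_nonincreasing; rewrite addSn.
apply: limr_le; first exact: is_cvg_series_exp_coeff.
apply: nearW => m; have [le_mn|lt_nm] := leqP m n.+1.
  apply: le_trans (le_tail 0%N); rewrite addn0.
  by apply: nondecreasing_series => // i _ _; rewrite exp_coeff1E invr_ge0 ler0n.
by have := le_tail (m - n.+1)%N; rewrite subnKC // ltnW.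
Qed.

Lemma fact_mul_expR1_near_nat n : exists M : nat,
  (n.+1%:R)^-1 < n`!%:R * e - M%:R <= 2 / n.+1%:R.
Proof.
exists (\sum_(i < n.+1) n`! %/ i`!)%N.
rewrite -fact_mul_series_exp_coeff1 -mulrBr.
have fact_gt0R : 0 < n`!%:R :> R by rewrite ltr0n fact_gt0.
have factSE c : c / n.+1`!%:R = (c / n.+1%:R) / n`!%:R :> R.
  by rewrite factS natrM invfM mulrA.
apply/andP; split.
- rewrite mulrC -ltr_pdivrMr // -[X in X / _]mul1r -factSE ltrBrDl.
  apply: lt_le_trans (series_exp_coeff1_le_expR n.+3).
  rewrite (seriesSr _ n.+2) (seriesSr _ n.+1) !exp_coeff1E -addrA ltrD2l mul1r ltrDl.
  by rewrite invr_gt0 ltr0n fact_gt0.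
- by rewrite mulrC -ler_pdivlMr // -factSE lerBlDl expR1_le_series.
Qed.

Lemma fact_mul_expR1_dist_int n (z : int) : (1 < n)%N ->
  (n.+1%:R)^-1 <= `|n`!%:R * e - z%:~R|.
Proof.
move=> n_gt1; have [M /andP[lb ub]] := fact_mul_expR1_near_nat n.
have n1_gt0 : 0 < n.+1%:R :> R by rewrite ltr0n.
have r3_le1 : 3 * (n.+1%:R)^-1 <= 1 :> R by rewrite ler_pdivrMr // mul1r ler_nat ltnS.
have -> : n`!%:R * e - z%:~R = (n`!%:R * e - M%:R) + (M%:Z - z)%:~R.
  by rewrite rmorphB /=; ring.
move: lb ub r3_le1.
set r := (n.+1%:R)^-1; set t := n`!%:R * e - M%:R.
have [zM|Mz] := lerP z M%:Z.
  have : 0 <= (M%:Z - z)%:~R :> R by rewrite ler0z subr_ge0.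
  set w := (M%:Z - z)%:~R => w_ge0 lb ub _.
  by rewrite ger0_norm; lra.
have : (M%:Z - z)%:~R <= -1 :> R.
  by rewrite -(intrN R 1) ler_int; lia.
set w := (M%:Z - z)%:~R => w_le lb ub r3.
by rewrite ler0_norm; lra.
Qed.

Lemma expR1_irrational : irrational e.
Proof.
move=> /rationalP[a [b eE]].
have [b0|b_gt0] := posnP b.
  by have := expR_gt0 (1 : R); rewrite eE b0 invr0 mulr0 ltxx.
have b_unit : (b%:R : R) \is a GRing.unit by rewrite unitfE pnatr_eq0 -lt0n.
have cE : ((b.+2`! %/ b)%:Z)%:~R = b.+2`!%:R / b%:R :> R.
  by rewrite -natr_div // dvdn_fact // b_gt0 leqW.
have := @fact_mul_expR1_dist_int b.+2 ((b.+2`! %/ b)%:Z * a) isT.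
rewrite eE rmorphM /= cE mulrAC mulrA subrr normr0.
by rewrite leNgt invr_gt0 ltr0n.
Qed.

End e_factorial.

Lemma approx_den_lt_cofactor (R : realType) (x : R) (n d q : nat) (p : int) :
  (forall z : int, (n.+1%:R)^-1 <= `|n`!%:R * x - z%:~R|) ->
  `|x * q%:R - p%:~R| * q%:R < 1 -> n`! = (d * q)%N -> (q < d * n.+1)%N.
Proof.
move=> dist approx nE.
have /andP[d_gt0 q_gt0] : (0 < d)%N && (0 < q)%N by rewrite -muln_gt0 -nE fact_gt0.
have := dist (d%:Z * p).
have -> : n`!%:R * x - (d%:Z * p)%:~R = d%:R * (x * q%:R - p%:~R).
  by rewrite nE natrM rmorphM /= -[(d%:Z)%:~R]/(d%:R); ring.
rewrite normrM ger0_norm ?ler0n // => le_dist.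
have n1_gt0 : 0 < n.+1%:R :> R by rewrite ltr0n.
rewrite -(ltr_nat R) natrM -ltr_pdivrMr // mulrC.
apply: le_lt_trans (_ : _ <= d%:R * `|x * q%:R - p%:~R| * q%:R) _.
  by rewrite ler_pM2r ?ltr0n.
by rewrite -mulrA -[ltRHS]mulr1 ltr_pM2l ?ltr0n.
Qed.

Lemma cf_den_expR1_lt_cofactor (R : realType) (k n d q : nat) :
  cf_den (expR (1 : R)) k = q%:Z -> (0 < n)%N -> n`! = (d * q)%N ->
  (q < d * n.+1)%N.
Proof.
move=> qE n_gt0 nE; have [n_le1|n_gt1] := leqP n 1.
  have n1 : n = 1%N by apply/anti_leq/andP.
  by move: nE; rewrite n1 => /esym/eqP; rewrite muln_eq1 => /andP[/eqP-> /eqP->].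
apply: approx_den_lt_cofactor nE => [z|].
  exact: fact_mul_expR1_dist_int.
by have := cf_num_den_approx (@expR1_irrational R) k; rewrite qE; apply.
Qed.

Theorem lemma2p1 (R : realType) (k : nat) (q : nat)
  (hq : cf_den (expR (1 : R)) k = q%:Z) :
  ((1 < q)%N ->
     forall S : nat, (0 < S)%N -> (q %| S`!)%N ->
       (forall m : nat, (0 < m)%N -> (m < S)%N -> ~~ (q %| m`!)%N) ->
       (q ^ 2 < S.+1`!)%N)
  /\
  (forall (n : nat) (d : int), (0 < n)%N -> (n`!)%:Z = d * q%:Z ->
     (n`!)%:R / (n.+1)%:R < (d ^+ 2)%:~R :> rat).
Proof.
split=> [_ S S_gt0 q_dvd _ | n [d|d] n_gt0 nE].
- have SE : S`! = (S`! %/ q * q)%N by rewrite divnK.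
  have := cf_den_expR1_lt_cofactor hq S_gt0 SE.
  rewrite factS SE; nia.
- have nE' : n`! = (d * q)%N by lia.
  have := cf_den_expR1_lt_cofactor hq n_gt0 nE'.
  rewrite ltr_pdivrMr ?ltr0n // -[(d%:Z ^+ 2)%:~R]/((d ^ 2)%:R) -natrM ltr_nat nE'.
  nia.
- by have := fact_gt0 n; rewrite NegzE in nE; nia.
Qed.
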